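(* Let $\mathbf A$ be an algebra with a Mal'cev term $q$. Then there exists a largest clone $\mathcal C$ on $A$ containing $q$ such that the algebra $(A,\mathcal C)$ has the same congruence lattice as $\mathbf A$ and, for every $n\ge1$ and all congruences $\alpha_0,\dots,\alpha_{n-1}$, the commutator $[\alpha_0,\dots,\alpha_{n-1}]$ computed in $(A,\mathcal C)$ equals the one computed in $\mathbf A$.
   Context: A Mal'cev term of $\mathbf A$ is a ternary term operation $q$ with $q(x,x,y)=y=q(y,x,x)$. For a clone $\mathcal C$ on $A$, $(A,\mathcal C)$ denotes the algebra whose operations are those of $\mathcal C$. Higher commutator (Bulatov): for congruences $\alpha_0,\dots,\alpha_{n-1},\gamma$ of an algebra, say $\alpha_0,\dots,\alpha_{n-2}$ centralize $\alpha_{n-1}$ modulo $\gamma$ if for all tuples $\mathbf a_i,\mathbf b_i$ ($i<n$, with $\mathbf a_i\neq\mathbf b_i$ congruent modulo $\alpha_i$ coordinatewise) and every term operation $t$ such that $t(\mathbf x_0,\dots,\mathbf x_{n-2},\mathbf a_{n-1})\equiv_\gamma t(\mathbf x_0,\dots,\mathbf x_{n-2},\mathbf b_{n-1})$ for all $(\mathbf x_0,\dots,\mathbf x_{n-2})\in(\{\mathbf a_0,\mathbf b_0\}\times\dots\times\{\mathbf a_{n-2},\mathbf b_{n-2}\})\setminus\{(\mathbf b_0,\dots,\mathbf b_{n-2})\}$, we have $t(\mathbf b_0,\dots,\mathbf b_{n-2},\mathbf a_{n-1})\equiv_\gamma t(\mathbf b_0,\dots,\mathbf b_{n-2},\mathbf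 b_{n-1})$. The commutator $[\alpha_0,\dots,\alpha_{n-1}]$ is the smallest congruence $\gamma$ such that $\alpha_0,\dots,\alpha_{n-2}$ centralize $\alpha_{n-1}$ modulo $\gamma$. *)

From mathcomp Require Import all_boot.
Set Implicit Arguments. Unset Strict Implicit. Unset Printing Implicit Defensive.

Definition op (A : Type) (n : nat) := ('I_n -> A) -> A.

Definition opset (A : Type) := forall n : nat, op A n -> Prop.

Definition proj (A : Type) (n : nat) (i : 'I_n) : op A n := fun x => x i.

Definition comp (A : Type) (n m : nat) (f : op A n) (g : 'I_n -> op A m) : op A m :=
  fun x => f (fun i => g i x).

Definition is_clone (A : Type) (C : opset A) : Prop :=
  (forall n (i : 'I_n), C n (@proj A n i)) /\
  (forall n m (f : op A n) (g : 'I_n -> op A m),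
      C n f -> (forall i, C m (g i)) -> C m (comp f g)).

(* clone of term operations of the algebra (A, F): the clone generated by F *)
Definition Clo (A : Type) (F : opset A) : opset A :=
  fun n f => forall C : opset A, is_clone C ->
    (forall k g, F k g -> C k g) -> C n f.

Definition subops (A : Type) (C D : opset A) : Prop :=
  forall n f, C n f -> D n f.

Definition rel (A : Type) := A -> A -> Prop.

Definition Con (A : Type) (F : opset A) (th : rel A) : Prop :=
  (forall x, th x x) /\ (forall x y, th x y -> th y x) /\
  (forall x y z, th x y -> th y z -> th x z) /\
  (forall n (f : op A n), F n f ->
     forall x y : 'I_n -> A, (forall i, th (x i) (y i)) -> th (f x) (f y)).

(* Tuples a_0,...,a_n (resp. b_...) are encoded as two m-tuples a, b together
   with a block assignment blk : 'I_m -> 'I_n.+1 telling which tuple each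
   argument position of the term operation t belongs to.
   For x : 'I_n -> bool (x i = true means "use b_i") and c : bool (choice for
   the last block), [pick] gives the argument tuple of t. *)
Definition pick (A : Type) (n m : nat) (blk : 'I_m -> 'I_n.+1) (a b : 'I_m -> A)
  (x : 'I_n -> bool) (c : bool) : 'I_m -> A :=
  fun j => if match unlift ord_max (blk j) with Some i => x i | None => c end
           then b j else a j.

(* alpha_0,...,alpha_{n-1} centralize alpha_n modulo gamma, in (A, F)
   (term condition quantifies over term operations, i.e. Clo F). *)
Definition centralizes (A : Type) (F : opset A) (n : nat)
  (alpha : 'I_n.+1 -> rel A) (gamma : rel A) : Prop :=
  forall m (blk : 'I_m -> 'I_n.+1) (a b : 'I_m -> A) (t : op A m),
    Clo F t ->
    (forall j, alpha (blk j) (a j) (b j)) ->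
    (forall i : 'I_n.+1, exists j, blk j = i /\ a j <> b j) ->
    (forall x : 'I_n -> bool, (exists i, x i = false) ->
       gamma (t (pick blk a b x false)) (t (pick blk a b x true))) ->
    gamma (t (pick blk a b (fun _ => true) false))
          (t (pick blk a b (fun _ => true) true)).

Definition is_commutator (A : Type) (F : opset A) (n : nat)
  (alpha : 'I_n.+1 -> rel A) (gamma : rel A) : Prop :=
  Con F gamma /\ centralizes F alpha gamma /\
  (forall delta, Con F delta -> centralizes F alpha delta ->
     forall x y, gamma x y -> delta x y).

Definition tri (A : Type) (x y z : A) : 'I_3 -> A :=
  fun i => match val i with 0 => x | 1 => y | _ => z end.

Definition is_malcev (A : Type) (q : op A 3) : Prop :=
  forall x y, q (tri x x y) = y /\ q (tri y x x) = y.

Definition preserves_cons_comms (A : Type) (F C : opset A) : Prop :=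
  (forall th : rel A, Con F th <-> Con C th) /\
  (forall n (alpha : 'I_n.+1 -> rel A), (forall i, Con F (alpha i)) ->
     forall gamma : rel A,
       is_commutator F alpha gamma <-> is_commutator C alpha gamma).

From mathcomp Require Import all_boot.
From Stdlib Require Import FunctionalExtensionality Classical IndefiniteDescription.
From Pilot Require Import Defs.
Set Implicit Arguments. Unset Strict Implicit. Unset Printing Implicit Defensive.

(* For congruences al_0, ..., al_(N-1) let M(al) be the subuniverse of A^(2^N)
   generated by the constant cubes and the cubes that vary in a single
   direction i, along an al_i-related pair.  In the presence of a Mal'cev term
   q, the commutator [al_0, ..., al_(N-1)] consists of the pairs (u, v) such that
   some cube of M(al) with top vertex u stays in M(al) when its top vertex is
   replaced by v.  Consequently two Mal'cev clones with the same congruences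
   and commutators have the same cubes M(al): by induction on N, every cube of
   the first clone agrees off its top with a cube that q builds from its lower
   faces, and the commutator corrects the top vertex.  The largest clone is
   therefore the clone of all operations preserving the congruences of A and
   the cubes M(al) of A. *)

Section GeneratedClone.
Variable A : Type.
Implicit Types F C D : opset A.

Definition preserves n (f : op A n) (th : rel A) :=
  forall x y : 'I_n -> A, (forall i, th (x i) (y i)) -> th (f x) (f y).

Lemma clone_Clo F : is_clone (Clo F).
Proof.
split=> [n i C [hproj _] _ | n m f g hf hg C hC hF]; first exact: hproj.
by apply: hC.2; [apply: hf | move=> i; apply: hg].
Qed.

Lemma Clo_gen F n (f : op A n) : F n f -> Clo F f.
Proof. by move=> hf C _ hF; apply: hF. Qed.

Lemma Clo_min F D : is_clone D -> subops F D -> subops (Clo F) D.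
Proof. by move=> hD hFD n f hf; apply: hf. Qed.

Lemma clone_preserves th : is_clone (fun n (f : op A n) => preserves f th).
Proof.
split=> [n i x y hxy | n m f g hf hg x y hxy]; first exact: hxy.
by apply: hf => i; apply: hg.
Qed.

Lemma Clo_preserves F th n (f : op A n) : Con F th -> Clo F f -> preserves f th.
Proof.
move=> [_ [_ [_ hF]]] hf.
by apply: (Clo_min (clone_preserves th) _ hf) => k g hg; apply: hF.
Qed.

Lemma Con_Clo F th : Con F th <-> Con (Clo F) th.
Proof.
split=> -[hr [hs [ht hF]]]; do 3 (split => //); move=> n f.
- by apply: Clo_preserves.
- by move=> hf; apply: hF; apply: Clo_gen.
Qed.

Lemma centralizes_Clo F n (al : 'I_n.+1 -> rel A) g :
  centralizes F al g <-> centralizes (Clo F) al g.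
Proof.
split=> hc m blk a b t ht; apply: hc; last exact: Clo_gen.
exact: Clo_min (clone_Clo F) (fun _ _ h => h) _ _ ht.
Qed.

Lemma preserves_cons_comms_of_centralizes F C :
  (forall th, Con F th <-> Con C th) ->
  (forall n (al : 'I_n.+1 -> rel A) g, (forall i, Con F (al i)) -> Con F g ->
     centralizes F al g <-> centralizes C al g) ->
  preserves_cons_comms F C.
Proof.
move=> hcon hcent; split=> // n al hal g.
split=> -[hg [hcg hmin]].
- have hgC := (hcon g).1 hg.
  split=> //; split; first exact/(hcent _ _ _ hal hg).
  move=> d hd hcd; have hdF := (hcon d).2 hd.
  by apply: hmin => //; apply/(hcent _ _ _ hal hdF).
- have hgF := (hcon g).2 hg.
  split=> //; split; first exact/(hcent _ _ _ hal hgF).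
  move=> d hd hcd; apply: hmin; first exact/hcon.
  exact/(hcent _ _ _ hal hd).
Qed.

Lemma preserves_cons_comms_Clo F : preserves_cons_comms F (Clo F).
Proof.
apply: preserves_cons_comms_of_centralizes => [th | n al g _ _].
- exact: Con_Clo.
- exact: centralizes_Clo.
Qed.

Definition comms_sub C D :=
  forall n (al : 'I_n.+1 -> rel A), (forall i, Con C (al i)) ->
    forall g, is_commutator C al g -> is_commutator D al g.

Lemma comms_sub_of_preserves F C D :
  preserves_cons_comms F C -> preserves_cons_comms F D -> comms_sub C D.
Proof.
move=> [hconC hcomC] [_ hcomD] n al hal g.
have halF i : Con F (al i) by apply/hconC.
by move=> /(hcomC _ _ halF) /(hcomD _ _ halF).
Qed.

End GeneratedClone.

Definition cube (A : Type) N := ('I_N -> bool) -> A.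

Inductive cubes (A : Type) (D : opset A) N (al : 'I_N -> rel A) : cube A N -> Prop :=
| cube_const u : cubes D al (fun _ => u)
| cube_edge i u v : al i u v -> cubes D al (fun X => if X i then v else u)
| cube_op k (f : op A k) (V : 'I_k -> cube A N) :
    D k f -> (forall j, cubes D al (V j)) -> cubes D al (fun X => f (fun j => V j X)).
Arguments cube_const {A D N al}.
Arguments cube_edge {A D N al i u v}.
Arguments cube_op {A D N al k f V}.

Definition vtop N : 'I_N -> bool := fun _ => true.
Arguments vtop {N}.

Definition eqv N (X Y : 'I_N -> bool) := [forall k, X k == Y k].

Lemma eqvP N (X Y : 'I_N -> bool) : reflect (X = Y) (eqv X Y).
Proof.
apply: (iffP forallP) => [h | -> k //].
by apply: functional_extensionality => k; apply/eqP.
Qed.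

Lemma eqvv N (X : 'I_N -> bool) : eqv X X.
Proof. exact/eqvP. Qed.

Definition upd (A : Type) N (W : cube A N) (p : 'I_N -> bool) (v : A) : cube A N :=
  fun X => if eqv X p then v else W X.

Lemma upd_agree (A : Type) N (V c : cube A N) :
  (forall X, eqv X vtop = false -> V X = c X) -> upd V vtop (c vtop) = c.
Proof.
move=> agree; apply: functional_extensionality => X; rewrite /upd.
by case E: (eqv X vtop); [move/eqvP: E => -> | rewrite agree].
Qed.

Definition setv N (X : 'I_N -> bool) (k : nat) (e : bool) : 'I_N -> bool :=
  fun i => if val i == k then e else X i.

(* [flipv p] is the symmetry of the cube exchanging the vertices [p] and [vtop]. *)
Definition flipv N (p X : 'I_N -> bool) : 'I_N -> bool := fun k => X k == p k.

Definition insv N (i : 'I_N.+1) (e : bool) (Y : 'I_N -> bool) : 'I_N.+1 -> bool :=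
  fun k => if unlift i k is Some k' then Y k' else e.

(* [pick blk a b x e] (from Defs) is convertible to [pickv blk a b (vsnoc x e)]. *)
Definition vsnoc n (x : 'I_n -> bool) (e : bool) : 'I_n.+1 -> bool :=
  fun k => if unlift ord_max k is Some i then x i else e.

Lemma flipv_top N (p X : 'I_N -> bool) : eqv (flipv p X) vtop = eqv X p.
Proof. by apply: eq_forallb => k; rewrite /flipv /vtop eqb_id. Qed.

Lemma flipvv N (p : 'I_N -> bool) : flipv p p = vtop.
Proof. by apply: functional_extensionality => k; rewrite /flipv eqxx. Qed.

Lemma insv_lift N (i : 'I_N.+1) (X : 'I_N.+1 -> bool) :
  insv i false (fun k => X (lift i k)) = setv X i false.
Proof.
apply: functional_extensionality => k; rewrite /insv /setv.
case: unliftP => [k'|] ->; last by rewrite eqxx.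
by rewrite -[_ == _]/(lift i k' == i) eq_sym (negbTE (neq_lift i k')).
Qed.

Lemma vsnoc_top n : vsnoc (@vtop n) true = vtop.
Proof. by apply: functional_extensionality => k; rewrite /vsnoc; case: unlift. Qed.

Lemma vsnoc_eta n (X : 'I_n.+1 -> bool) :
  vsnoc (fun i => X (lift ord_max i)) (X ord_max) = X.
Proof.
by apply: functional_extensionality => k; rewrite /vsnoc; case: unliftP => [k'|] ->.
Qed.

Lemma setv_vsnoc n (x : 'I_n -> bool) e b : setv (vsnoc x e) n b = vsnoc x b.
Proof.
apply: functional_extensionality => k; rewrite /setv /vsnoc.
case: unliftP => [k'|] ->; last by rewrite eqxx.
by rewrite -[_ == n]/(lift ord_max k' == ord_max) eq_sym (negbTE (neq_lift _ k')).
Qed.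

Lemma eqv_vsnoc_top n (x : 'I_n -> bool) e : eqv (vsnoc x e) vtop = [forall i, x i] && e.
Proof.
apply/forallP/andP => [htop | [/forallP hx he] k].
  split; last by have := htop ord_max; rewrite /vsnoc /vtop unlift_none eqb_id.
  by apply/forallP => i; have := htop (lift ord_max i); rewrite /vsnoc /vtop liftK eqb_id.
by rewrite /vsnoc /vtop; case: unlift => [i|]; rewrite eqb_id.
Qed.

Section CubeClosure.
Variables (A : Type) (D : opset A).

Lemma cubes_eq N (al : 'I_N -> rel A) c c' : cubes D al c -> c =1 c' -> cubes D al c'.
Proof. by move=> hc /functional_extensionality <-. Qed.

Lemma cubes_setv N (al : 'I_N -> rel A) c k e :
  cubes D al c -> cubes D al (fun X => c (setv X k e)).
Proof.
elim=> [u | i u v h | m f V hf _ IH]; first exact: cube_const.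
- by rewrite /setv; case: eqP => _; [apply: cube_const | apply: cube_edge].
- exact: (cube_op (V := fun j X => V j (setv X k e))).
Qed.

Lemma cubes_flipv N (al : 'I_N -> rel A) c p :
  (forall i x y, al i x y -> al i y x) ->
  cubes D al c -> cubes D al (fun X => c (flipv p X)).
Proof.
move=> hsym; elim=> [u | i u v h | m f V hf _ IH]; first exact: cube_const.
- case hp: (p i);
    [apply: (cubes_eq (cube_edge h)) | apply: (cubes_eq (cube_edge (hsym _ _ _ h)))];
    by move=> X; rewrite /flipv hp; case: (X i).
- exact: (cube_op (V := fun j X => V j (flipv p X))).
Qed.

Lemma cubes_face N (al : 'I_N.+1 -> rel A) c (i : 'I_N.+1) e :
  cubes D al c -> cubes D (fun k => al (lift i k)) (fun Y => c (insv i e Y)).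
Proof.
elim=> [u | k u v h | m f V hf _ IH]; first exact: cube_const.
- by rewrite /insv; case: unliftP h => [k'|] -> h; [apply: cube_edge | apply: cube_const].
- exact: (cube_op (V := fun j Y => V j (insv i e Y))).
Qed.

Lemma cubes_lift N (al : 'I_N.+1 -> rel A) d (i : 'I_N.+1) :
  cubes D (fun k => al (lift i k)) d -> cubes D al (fun X => d (fun k => X (lift i k))).
Proof.
elim=> [u | k u v h | m f V hf _ IH]; [exact: cube_const | exact: cube_edge h |].
exact: (cube_op (V := fun j X => V j (fun k => X (lift i k)))).
Qed.

Lemma cubes_q (q : op A 3) N (al : 'I_N -> rel A) V1 V2 V3 :
  D q -> cubes D al V1 -> cubes D al V2 -> cubes D al V3 ->
  cubes D al (fun X => q (tri (V1 X) (V2 X) (V3 X))).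
Proof.
move=> hq h1 h2 h3.
by apply: (cube_op (V := fun j X => tri (V1 X) (V2 X) (V3 X) j) hq) => -[[|[|j]] hj].
Qed.

Definition pickv m N (blk : 'I_m -> 'I_N) (a b : 'I_m -> A) (X : 'I_N -> bool) :
  'I_m -> A := fun j => if X (blk j) then b j else a j.

Lemma cubes_term N (al : 'I_N -> rel A) m (blk : 'I_m -> 'I_N) a b (t : op A m) :
  D t -> (forall j, al (blk j) (a j) (b j)) -> cubes D al (fun X => t (pickv blk a b X)).
Proof. by move=> ht hab; apply: cube_op ht _ => j; apply: cube_edge. Qed.

End CubeClosure.

Section TermCondition.
Variables (A : Type) (D : opset A).
Hypothesis clone_D : is_clone D.

Definition term_cube N (al : 'I_N -> rel A) (c : cube A N) :=
  exists m (blk : 'I_m -> 'I_N) (a b : 'I_m -> A) (t : op A m),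
    [/\ D t, forall j, al (blk j) (a j) (b j) & c =1 fun X => t (pickv blk a b X)].

Lemma term_cubes_common N (al : 'I_N -> rel A) k (V : 'I_k -> cube A N) :
  (forall j, term_cube al (V j)) ->
  exists m (blk : 'I_m -> 'I_N) (a b : 'I_m -> A) (g : 'I_k -> op A m),
    [/\ forall j, D (g j), forall j, al (blk j) (a j) (b j) &
        forall j, V j =1 fun X => g j (pickv blk a b X)].
Proof.
elim: k V => [|k IH] V hV.
  have I0 T : 'I_0 -> T by case.
  by exists 0, (I0 _), (I0 _), (I0 _), (I0 _); split; case.
have [m1 [blk1 [a1 [b1 [g1 [hg1 hab1 he1]]]]]] := IH _ (fun j => hV (lift ord0 j)).
have [m2 [blk2 [a2 [b2 [t2 [ht2 hab2 he2]]]]]] := hV ord0.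
pose cat T (u : 'I_m1 -> T) (w : 'I_m2 -> T) j :=
  match split j with inl i => u i | inr i => w i end.
have pick_lshift X i : pickv (cat _ blk1 blk2) (cat _ a1 a2) (cat _ b1 b2) X (lshift m2 i)
                       = pickv blk1 a1 b1 X i.
  by rewrite /pickv /cat (unsplitK (inl _ i)).
have pick_rshift X i : pickv (cat _ blk1 blk2) (cat _ a1 a2) (cat _ b1 b2) X (rshift m1 i)
                       = pickv blk2 a2 b2 X i.
  by rewrite /pickv /cat (unsplitK (inr _ i)).
exists (m1 + m2), (cat _ blk1 blk2), (cat _ a1 a2), (cat _ b1 b2),
  (fun j => if unlift ord0 j is Some j' then comp (g1 j') (fun i => @proj A _ (lshift m2 i))
            else comp t2 (fun i => @proj A _ (rshift m1 i))).
have [clone_proj clone_comp] := clone_D.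
split=> [j | j | j X]; first by case: unlift => *; apply: clone_comp.
- by rewrite /cat; case: split.
- case: unliftP => [j'|] ->; rewrite /comp /proj ?he1 ?he2; congr (_ _);
    apply: functional_extensionality => i; symmetry; [apply: pick_lshift | apply: pick_rshift].
Qed.

Lemma cubes_term_cube n (al : 'I_n.+1 -> rel A) c :
  (forall i x, al i x x) -> cubes D al c -> term_cube al c.
Proof.
move=> hrefl; have [clone_proj clone_comp] := clone_D.
elim=> [u | i u v h | k f V hf _ IH].
- exists 1, (fun _ => ord0), (fun _ => u), (fun _ => u), (@proj A 1 ord0).
  by split=> // X; rewrite /proj /pickv if_same.
- by exists 1, (fun _ => i), (fun _ => u), (fun _ => v), (@proj A 1 ord0).
- have [m [blk [a [b [g [hg hab he]]]]]] := term_cubes_common IH.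
  exists m, blk, a, b, (comp f g); split=> [|//|X]; first exact: clone_comp.
  by rewrite /comp; congr f; apply: functional_extensionality => j; apply: he.
Qed.

Definition term_cond n (g : rel A) (c : cube A n.+1) :=
  (forall x : 'I_n -> bool, (exists i, x i = false) ->
     g (c (vsnoc x false)) (c (vsnoc x true))) ->
  g (c (vsnoc vtop false)) (c (vsnoc vtop true)).

Lemma pickv_degenerate m N (blk : 'I_m -> 'I_N) (a b : 'I_m -> A) (i : 'I_N) X Y :
  (forall j, blk j = i -> a j = b j) -> (forall k, k != i -> X k = Y k) ->
  pickv blk a b X = pickv blk a b Y.
Proof.
move=> hab hXY; apply: functional_extensionality => j; rewrite /pickv.
by case: (eqVneq (blk j) i) => [hj | /hXY -> //]; rewrite (hab j hj) !if_same.
Qed.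

Lemma term_cond_degenerate n g m (blk : 'I_m -> 'I_n.+1) a b (t : op A m) (i : 'I_n.+1) :
  (forall x, g x x) -> (forall j, blk j = i -> a j = b j) ->
  term_cond g (fun X => t (pickv blk a b X)).
Proof.
rewrite /term_cond /= => hg hab hcond; case: (unliftP ord_max i) hab => [i'|] -> hab.
- pose x k := k != i'.
  have hx e : pickv blk a b (vsnoc x e) = pickv blk a b (vsnoc vtop e).
    apply: pickv_degenerate hab _ => k; rewrite /vsnoc.
    case: unliftP => [k'|] -> hk; rewrite ?liftK ?unlift_none //.
    by rewrite /x /vtop; apply: contraNneq hk => ->.
  by rewrite -!hx; apply: hcond; exists i'; rewrite /x eqxx.
- suff -> : pickv blk a b (vsnoc vtop false) = pickv blk a b (vsnoc vtop true) by [].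
  apply: pickv_degenerate hab _ => k; rewrite /vsnoc.
  by case: unliftP => [k'|] ->; rewrite ?eqxx.
Qed.

Lemma centralizes_term_cond n (al : 'I_n.+1 -> rel A) g c :
  centralizes D al g -> (forall x, g x x) -> (forall i x, al i x x) ->
  cubes D al c -> term_cond g c.
Proof.
move=> hc hg hrefl /(cubes_term_cube hrefl).
move=> [m [blk [a [b [t [ht hab /functional_extensionality ->]]]]]].
case: (classic (forall i, exists j, blk j = i /\ a j <> b j)).
  by move=> hne; apply: hc (Clo_gen ht) hab hne.
move=> /not_all_ex_not [i hi]; apply: (term_cond_degenerate (i := i) hg) => j hj.
by apply: NNPP => hneq; apply: hi; exists j.
Qed.

End TermCondition.

Section CommutatorRelation.
Variables (A : Type) (D : opset A) (q : op A 3).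
Hypotheses (clone_D : is_clone D) (q_D : D q) (malcev_q : is_malcev q).

Let qxxy x y : q (tri x x y) = y. Proof. exact: (malcev_q x y).1. Qed.
Let qyxx x y : q (tri y x x) = y. Proof. exact: (malcev_q x y).2. Qed.

Section AnyDimension.
Variables (N : nat) (al : 'I_N -> rel A).
Hypothesis al_sym : forall i x y, al i x y -> al i y x.

Definition comm_rel (u v : A) :=
  exists W, [/\ cubes D al W, W vtop = u & cubes D al (upd W vtop v)].

Lemma comm_rel_refl u : comm_rel u u.
Proof.
exists (fun _ => u); split=> //; first exact: cube_const.
by apply: (cubes_eq (cube_const u)) => X; rewrite /upd if_same.
Qed.

Lemma cubes_upd V p v : cubes D al V -> comm_rel (V p) v -> cubes D al (upd V p v).
Proof.
move=> hV [W [hW hWtop hWv]].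
have hWp := cubes_flipv p al_sym hW; have hWvp := cubes_flipv p al_sym hWv.
apply: (cubes_eq (cubes_q q_D hV hWp hWvp)) => X /=.
rewrite /upd flipv_top; case: eqvP => [-> | _]; last exact: qyxx.
by rewrite flipvv hWtop qxxy.
Qed.

Lemma comm_rel_sym u v : comm_rel u v -> comm_rel v u.
Proof.
move=> [W [hW hWtop hWv]]; exists (upd W vtop v); split=> //; first by rewrite /upd eqvv.
by apply: (cubes_eq hW) => X; rewrite /upd; case: eqvP => // ->.
Qed.

Lemma comm_rel_trans u v w : comm_rel u v -> comm_rel v w -> comm_rel u w.
Proof.
move=> [W [hW hWtop hWv]] hvw; exists W; split=> //.
have hvw' : comm_rel (upd W vtop v vtop) w by rewrite /upd eqvv.
by apply: (cubes_eq (cubes_upd hWv hvw')) => X; rewrite /upd; case: eqvP.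
Qed.

Lemma comm_rel_compat k (f : op A k) x y :
  D f -> (forall i, comm_rel (x i) (y i)) -> comm_rel (f x) (f y).
Proof.
move=> hf /functional_choice [W hW].
exists (fun X => f (fun i => W i X)); split.
- by apply: cube_op hf _ => i; case: (hW i).
- by congr f; apply: functional_extensionality => i; case: (hW i).
- apply: (cubes_eq (cube_op (V := fun i => upd (W i) vtop (y i)) hf _)) => [i | X].
    by case: (hW i).
  by rewrite /upd; case: ifP.
Qed.

(* Update the vertices one by one, enumerating them as finite functions. *)
Lemma cubes_comm_rel V W :
  cubes D al V -> (forall X, comm_rel (V X) (W X)) -> cubes D al W.
Proof.
move=> hV hVW.
pose mix (s : seq {ffun 'I_N -> bool}) X :=
  if has (fun p : {ffun 'I_N -> bool} => eqv X p) s then W X else V X.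
suff /(_ (enum {ffun 'I_N -> bool})) hmix : forall s, cubes D al (mix s).
  apply: (cubes_eq hmix) => X; rewrite /mix.
  suff -> : has (fun p : {ffun 'I_N -> bool} => eqv X p) (enum {ffun 'I_N -> bool}) by [].
  apply/hasP; exists [ffun k => X k]; first by rewrite mem_enum.
  by apply/forallP => k; rewrite ffunE.
elim=> [|p s IH]; first exact: (cubes_eq hV).
have hp : comm_rel (mix s p) (W p).
  by rewrite /mix; case: has; [apply: comm_rel_refl | apply: hVW].
by apply: (cubes_eq (cubes_upd IH hp)) => X; rewrite /upd /mix /=; case: eqvP => [->|].
Qed.

End AnyDimension.

Variables (n : nat) (al : 'I_n.+1 -> rel A).
Hypotheses (al_refl : forall i x, al i x x) (al_sym : forall i x y, al i x y -> al i y x).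

Lemma comm_rel_centralizes : centralizes D al (comm_rel al).
Proof.
move=> m blk a b t ht hab _ hcond.
pose c X := t (pickv blk a b X).
have hc : cubes D al c := cubes_term (Clo_min clone_D (fun _ _ h => h) ht) hab.
change (comm_rel al (c (vsnoc vtop false)) (c (vsnoc vtop true))); rewrite vsnoc_top.
exists (upd c vtop (c (vsnoc vtop false))); split; first last.
- by apply: (cubes_eq hc) => X; rewrite /upd; case: eqvP => [->|].
- by rewrite /upd eqvv.
apply: (cubes_comm_rel al_sym (cubes_setv n false hc)) => X.
rewrite /upd; case: eqvP => [-> | hX].
  by rewrite -{1}vsnoc_top setv_vsnoc; apply: comm_rel_refl.
rewrite -(vsnoc_eta X) setv_vsnoc; case htop: (X ord_max); last exact: comm_rel_refl.
apply: hcond; apply: NNPP => hn; apply: hX; apply: functional_extensionality => k.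
case: (unliftP ord_max k) => [k'|] -> //; rewrite /vtop.
by case hk: (X _) => //; case: hn; exists k'.
Qed.

Lemma centralizes_top g c V :
  centralizes D al g -> (forall x, g x x) ->
  cubes D al c -> cubes D al V -> (forall X, eqv X vtop = false -> V X = c X) ->
  g (V vtop) (c vtop).
Proof.
move=> hcg hg hc hV hVc.
(* Along the last direction, w runs from V to c at the top and is constant elsewhere. *)
pose w X := q (tri (c X) (V X) (V (setv X n true))).
have hw : cubes D al w by apply: cubes_q => //; apply: cubes_setv.
have -> : V vtop = w (vsnoc vtop false).
  by rewrite /w setv_vsnoc vsnoc_top (hVc (vsnoc vtop false)) ?eqv_vsnoc_top ?andbF // qxxy.
have -> : c vtop = w (vsnoc vtop true) by rewrite /w setv_vsnoc vsnoc_top qyxx.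
apply: (centralizes_term_cond clone_D hcg hg al_refl hw) => x [i hi].
have hx e : V (vsnoc x e) = c (vsnoc x e).
  by apply: hVc; rewrite eqv_vsnoc_top; case: forallP => // /(_ i); rewrite hi.
by rewrite /w !setv_vsnoc !hx qxxy qyxx.
Qed.

Lemma comm_rel_is_commutator : is_commutator D al (comm_rel al).
Proof.
split; last split; first last.
- move=> d [drefl _] hcd u v [W [hW <- hWv]].
  have agree X : eqv X vtop = false -> W X = upd W vtop v X by rewrite /upd => ->.
  by have := centralizes_top hcd drefl hWv hW agree; rewrite /upd eqvv.
- exact: comm_rel_centralizes.
do 3 (split; first by [apply: comm_rel_refl | apply: comm_rel_sym | apply: comm_rel_trans]).
by move=> k f hf x y; apply: comm_rel_compat.
Qed.

End CommutatorRelation.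

Section Filling.
Variables (A : Type) (D : opset A) (q : op A 3).
Hypothesis malcev_q : is_malcev q.

Fixpoint fill N (c : cube A N) k : cube A N :=
  if k is k'.+1 then
    fun X => q (tri (fill c k' X) (fill c k' (setv X k' false)) (c (setv X k' false)))
  else fun _ => c vtop.

Lemma fill_agree N (c : cube A N) k X (i : 'I_N) :
  i < k -> X i = false -> fill c k X = c X.
Proof.
elim: k X i => [//|k IH] X i + hXi /=; rewrite ltnS leq_eqVlt => /orP [/eqP hik | hik].
  have -> : setv X k false = X.
    apply: functional_extensionality => j; rewrite /setv; case: eqP => // hj.
    by rewrite -hXi; congr X; apply: val_inj; rewrite hj; exact: hik.
  exact: (malcev_q _ _).1.
rewrite (IH X i) ?(IH (setv X k false) i) //; last by rewrite /setv (ltn_eqF hik).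
exact: (malcev_q _ _).2.
Qed.

Lemma fill_cubes N (al : 'I_N -> rel A) c :
  D q -> (forall i : 'I_N, cubes D al (fun X => c (setv X i false))) ->
  forall k, k <= N -> cubes D al (fill c k).
Proof.
move=> q_D faces; elim=> [|k IH] hk; first exact: cube_const.
have hfill := IH (ltnW hk).
by apply: cubes_q => //; [apply: cubes_setv | apply: (faces (Ordinal hk))].
Qed.

End Filling.

Section SameCubes.
Variables (A : Type) (D1 D2 : opset A) (q : op A 3).
Hypotheses (clone_D1 : is_clone D1) (clone_D2 : is_clone D2).
Hypotheses (q_D1 : D1 q) (q_D2 : D2 q) (malcev_q : is_malcev q).
Hypothesis comms12 : comms_sub D1 D2.

Lemma cubes_sub N (al : 'I_N -> rel A) c :
  (forall i, Con D1 (al i)) -> cubes D1 al c -> cubes D2 al c.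
Proof.
elim: N al c => [|N IH] al c hal hc.
  apply: (cubes_eq (cube_const (c vtop))) => X.
  by congr c; apply: functional_extensionality; case.
have al_refl i x : al i x x by case: (hal i).
have al_sym i x y : al i x y -> al i y x by case: (hal i) => _ [hs _]; apply: hs.
have faces1 (i : 'I_N.+1) : cubes D1 al (fun X => c (setv X i false)) by apply: cubes_setv.
have faces2 (i : 'I_N.+1) : cubes D2 al (fun X => c (setv X i false)).
  apply: (cubes_eq (cubes_lift (IH _ _ (fun k => hal (lift i k)) (cubes_face i false hc)))).
  by move=> X; rewrite insv_lift.
set V := fill q c N.+1.
have V1 : cubes D1 al V := fill_cubes q_D1 faces1 (leqnn _).
have V2 : cubes D2 al V := fill_cubes q_D2 faces2 (leqnn _).
have agree X : eqv X vtop = false -> V X = c X.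
  move=> /negbT /forallPn [i hi]; apply: (fill_agree malcev_q _ (ltn_ord i)).
  by move: hi; rewrite /vtop; case: (X i).
have top1 : comm_rel D1 al (V vtop) (c vtop) by exists V; rewrite upd_agree.
have [_ [_ comm1_min]] :=
  comms12 hal (comm_rel_is_commutator clone_D1 q_D1 malcev_q al_refl al_sym).
have [comm2_con [comm2_cent _]] :=
  comm_rel_is_commutator clone_D2 q_D2 malcev_q al_refl al_sym.
have top2 : comm_rel D2 al (V vtop) (c vtop) := comm1_min _ comm2_con comm2_cent _ _ top1.
by rewrite -(upd_agree agree); apply: (cubes_upd q_D2 malcev_q al_sym V2 top2).
Qed.

End SameCubes.

Definition max_clone (A : Type) (F : opset A) : opset A := fun n f =>
  (forall th, Con F th -> preserves f th) /\
  (forall N (al : 'I_N -> rel A), (forall i, Con F (al i)) ->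
     forall V : 'I_n -> cube A N, (forall j, cubes (Clo F) al (V j)) ->
       cubes (Clo F) al (fun X => f (fun j => V j X))).

Section MaxClone.
Variables (A : Type) (F : opset A).

Lemma clone_max_clone : is_clone (max_clone F).
Proof.
split=> [n i | n m f g [f_con f_cubes] hg]; first by split=> [th _ x y | N al _ V]; apply.
split=> [th hth x y hxy | N al hal V hV]; first by apply: f_con => // i; apply: (hg i).1.
exact: (f_cubes N al hal (fun i X => g i (fun j => V j X)) (fun i => (hg i).2 N al hal V hV)).
Qed.

Lemma Clo_max_clone : subops (Clo F) (max_clone F).
Proof.
apply: Clo_min clone_max_clone _ => n f hf.
split=> [th [_ [_ [_ hF]]] | N al _ V hV]; first exact: hF.
exact: cube_op (Clo_gen hf) hV.
Qed.

Lemma Con_max_clone th : Con F th <-> Con (max_clone F) th.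
Proof.
split=> hth; have [hr [hs [ht hF]]] := hth; do 3 (split => //); move=> n f.
- by case=> /(_ _ hth) f_th _.
- by move=> hf; apply: hF; apply: Clo_max_clone; apply: Clo_gen.
Qed.

Lemma centralizes_max_clone n (al : 'I_n.+1 -> rel A) g :
  (forall i, Con F (al i)) -> Con F g ->
  centralizes F al g <-> centralizes (max_clone F) al g.
Proof.
move=> hal [g_refl _]; split=> hc m blk a b t ht; last first.
  by apply: hc; apply: Clo_gen; apply: Clo_max_clone.
have [_ t_cubes] := Clo_min clone_max_clone (fun _ _ h => h) ht.
move=> hab _ hcond.
have hcube : cubes (Clo F) al (fun X => t (pickv blk a b X)) :=
  t_cubes _ al hal (fun j X => if X (blk j) then b j else a j) (fun j => cube_edge (hab j)).
have al_refl i x : al i x x by case: (hal i).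
have hcF := (centralizes_Clo F al g).1 hc.
exact: (centralizes_term_cond (clone_Clo F) hcF g_refl al_refl hcube hcond).
Qed.

Lemma preserves_cons_comms_max_clone : preserves_cons_comms F (max_clone F).
Proof. exact: preserves_cons_comms_of_centralizes Con_max_clone centralizes_max_clone. Qed.

Lemma max_clone_greatest (q : op A 3) (D : opset A) :
  Clo F q -> is_malcev q -> is_clone D -> D 3 q -> preserves_cons_comms F D ->
  subops D (max_clone F).
Proof.
move=> q_F malcev_q clone_D q_D presD.
have commsFD := comms_sub_of_preserves (preserves_cons_comms_Clo F) presD.
have commsDF := comms_sub_of_preserves presD (preserves_cons_comms_Clo F).
move=> n f hf; split=> [th /presD.1 [_ [_ [_ hD]]] | N al hal V hV]; first exact: hD.
have halC i : Con (Clo F) (al i) := (Con_Clo F _).1 (hal i).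
have halD i : Con D (al i) := (presD.1 _).1 (hal i).
apply: (cubes_sub clone_D (clone_Clo F) q_D q_F malcev_q commsDF halD).
apply: cube_op hf _ => j.
exact: (cubes_sub (clone_Clo F) clone_D q_F q_D malcev_q commsFD halC (hV j)).
Qed.

End MaxClone.

Theorem mainTheorem3 (A : Type) (F : opset A) (q : op A 3)
  (hq : Clo F q) (hmal : is_malcev q) :
  exists C : opset A,
    [/\ is_clone C, C 3 q, preserves_cons_comms F C &
        forall D : opset A, is_clone D -> D 3 q -> preserves_cons_comms F D ->
          subops D C].
Proof.
exists (max_clone F); split.
- exact: clone_max_clone.
- exact: Clo_max_clone hq.
- exact: preserves_cons_comms_max_clone.
- move=> D; exact: max_clone_greatest hq hmal.
Qed.
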